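(* Let $p$ be a prime, let $n\geqslant 2$ be an integer, let $m\geqslant 0$ be an integer and let $k\geqslant 2$ be an integer not divisible by $p$. For positive integers $a,r$ let $w(a,r)=\frac{1}{r}\sum_{d\mid r}\mu(d)\,a^{r/d}$, where $\mu$ is the Möbius function. Then $$\frac{w(n^{p^m},k)}{p^m\, w(n,p^mk)} \geqslant 1 - \frac{k}{2n^{p^mk/2}}.$$ *)

From mathcomp Require Import all_boot all_order all_algebra.
From mathcomp Require Import reals.
Set Implicit Arguments. Unset Strict Implicit. Unset Printing Implicit Defensive.
Import Order.TTheory GRing.Theory Num.Theory.
Local Open Scope ring_scope.

Definition moebius (d : nat) : int :=
  if all (fun q => logn q d == 1%N) (primes d) then (-1) ^+ size (primes d) else 0.

Definition necklace_w (R : realType) (a r : nat) : R :=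
  (r%:R)^-1 * \sum_(d <- divisors r) (moebius d)%:~R * ((a ^ (r %/ d))%N)%:R.

From mathcomp Require Import all_boot all_order all_algebra.
From mathcomp Require Import reals.
From mathcomp Require Import zify ring lra.
Import Order.TTheory GRing.Theory Num.Theory.
Local Open Scope ring_scope.

(* Write M(a, r) = [necklace_sum a r] = r w(a, r). The term d = 1 of M(a, r)
   is a^r and the at most r - 1 others are bounded by a^(r/2), so M(a, r) > 0.
   Splitting the divisors of p^(j+1) k according to whether p divides them,
   and using mu(p e) = 0 if p | e and mu(p e) = - mu(e) otherwise, gives
     M(n, p^(j+1) k) = M(n^(p^(j+1)), k) - M(n^(p^j), k) < M(n^(p^(j+1)), k).
   Hence k w(n^(p^m), k) >= p^m k w(n, p^m k): the ratio is at least 1, which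
   is stronger than the claimed bound. *)

Lemma moebius_mul_prime_dvd p e : prime p -> (0 < e)%N -> (p %| e)%N ->
  moebius (p * e) = 0.
Proof.
move=> p_pr e_gt0 p_dvd_e; rewrite /moebius; case: ifP => // /allP sqfree.
have pe_gt0 : (0 < p * e)%N by rewrite muln_gt0 prime_gt0.
have := sqfree p; rewrite mem_primes p_pr pe_gt0 dvdn_mulr //= => /(_ isT) /eqP.
rewrite (lognM _ (prime_gt0 p_pr) e_gt0) logn_prime // eqxx.
have : (0 < logn p e)%N by rewrite logn_gt0 mem_primes p_pr e_gt0 p_dvd_e.
by case: (logn p e).
Qed.

Lemma moebius_mul_prime_ndvd p e : prime p -> (0 < e)%N -> ~~ (p %| e)%N ->
  moebius (p * e) = - moebius e.
Proof.
move=> p_pr e_gt0 p_ndvd_e; have p_gt0 := prime_gt0 p_pr.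
have primes_pe : perm_eq (primes (p * e)) (p :: primes e).
  apply: uniq_perm; first exact: primes_uniq.
    by rewrite cons_uniq primes_uniq mem_primes p_pr e_gt0 (negbTE p_ndvd_e) !andbF.
  by move=> q; rewrite (primesM _ p_gt0 e_gt0) primes_prime // in_cons inE in_nil orbF.
rewrite /moebius (perm_all _ primes_pe) (perm_size primes_pe) /=.
rewrite (lognM _ p_gt0 e_gt0) logn_prime // eqxx logn_coprime ?prime_coprime //=.
have -> : all (fun q => logn q (p * e) == 1%N) (primes e) =
          all (fun q => logn q e == 1%N) (primes e).
  apply: eq_in_all => q; rewrite mem_primes => /and3P [q_pr _ q_dvd_e].
  have q_neq_p : q != p by apply: contraNneq p_ndvd_e => <-.
  by rewrite (lognM _ p_gt0 e_gt0) logn_prime // (negbTE q_neq_p).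
by case: ifP => _; rewrite ?oppr0 // exprS mulN1r.
Qed.

Lemma norm_moebius_le1 d : `|moebius d| <= 1.
Proof. by rewrite /moebius; case: ifP => _; rewrite ?normrX ?normrN1 ?expr1n. Qed.

Lemma leq_double_exp2 u : (u.*2 <= 2 ^ u)%N.
Proof. by elim: u => // u IH; rewrite expnS doubleS; have := ltn_expl u (ltnSn 1); lia. Qed.

Lemma sum_proper_divisors_exp_lt a r : (2 <= a)%N -> (0 < r)%N ->
  (\sum_(d <- divisors r | d != 1%N) a ^ (r %/ d) < a ^ r)%N.
Proof.
move=> a_ge2 r_gt0.
have count_proper : (count (predC1 1%N) (divisors r) <= r.-1)%N.
  rewrite -size_filter -[r.-1](size_iota 2); apply: uniq_leq_size.
    by rewrite filter_uniq // divisors_uniq.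
  move=> d; rewrite mem_filter -dvdn_divisors // mem_iota => /andP [/= d_neq1 d_dvd_r].
  have := dvdn_leq r_gt0 d_dvd_r; have := dvdn_gt0 r_gt0 d_dvd_r; lia.
apply: (@leq_ltn_trans (\sum_(d <- divisors r | d != 1%N) a ^ r./2)).
  rewrite big_seq_cond [leqRHS]big_seq_cond; apply: leq_sum => d.
  case/andP; rewrite -dvdn_divisors // => d_dvd_r d_neq1.
  have := dvdn_gt0 r_gt0 d_dvd_r => d_gt0.
  apply: leq_pexp2l; first lia.
  by rewrite -divn2; apply: leq_div2l; lia.
have half_le : (r./2 <= r)%N by rewrite -divn2 leq_div.
rewrite big_const_seq iter_addn_0 -[in ltnRHS](subnK half_le) expnD.
rewrite mulnC ltn_pmul2r ?expn_gt0 ?(ltnW a_ge2) //.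
have half_split : (r - r./2 = uphalf r)%N.
  by rewrite uphalf_half -{1}(odd_double_half r) -addnn; lia.
apply: (leq_ltn_trans count_proper); rewrite half_split.
have two_pow_le : (2 ^ uphalf r <= a ^ uphalf r)%N by rewrite leq_exp2r ?uphalf_gt0.
have r_le : (r <= (uphalf r).*2)%N by rewrite -leq_uphalf_double.
have := leq_double_exp2 (uphalf r); lia.
Qed.

Lemma big_divisors_coprime_prime (V : nmodType) p j k (F : nat -> V) :
  prime p -> (0 < k)%N -> ~~ (p %| k)%N ->
  \sum_(d <- divisors (p ^ j * k) | ~~ (p %| d)%N) F d = \sum_(d <- divisors k) F d.
Proof.
move=> p_pr k_gt0 p_ndvd_k; rewrite -big_filter; apply: perm_big.
have pjk_gt0 : (0 < p ^ j * k)%N by rewrite muln_gt0 expn_gt0 prime_gt0.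
apply: uniq_perm; rewrite ?filter_uniq ?divisors_uniq // => d.
rewrite mem_filter -!dvdn_divisors //; case p_dvd_d: (p %| d)%N => /=.
  by apply/esym/negP => d_dvd_k; rewrite (dvdn_trans p_dvd_d d_dvd_k) in p_ndvd_k.
rewrite Gauss_dvdr //; apply: coprimeXr.
by rewrite coprime_sym prime_coprime // p_dvd_d.
Qed.

Lemma big_divisors_split_prime (V : nmodType) p L (F : nat -> V) :
  prime p -> (0 < L)%N -> (p %| L)%N ->
  \sum_(d <- divisors L) F d =
  \sum_(d <- divisors L | ~~ (p %| d)%N) F d + \sum_(e <- divisors (L %/ p)) F (p * e)%N.
Proof.
move=> p_pr L_gt0 p_dvd_L; have p_gt0 := prime_gt0 p_pr.
rewrite (bigID (fun d => ~~ (p %| d)%N)) /=; congr (_ + _).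
rewrite -big_filter -(big_map (muln p) predT); apply: perm_big; apply: uniq_perm.
- by rewrite filter_uniq // divisors_uniq.
- by rewrite map_inj_uniq ?divisors_uniq // => a b /eqP; rewrite eqn_pmul2l // => /eqP.
have Lp_gt0 : (0 < L %/ p)%N by rewrite divn_gt0 // dvdn_leq.
have L_eq : L = (p * (L %/ p))%N by rewrite mulnC divnK.
move=> d; rewrite mem_filter negbK -dvdn_divisors //; apply/idP/idP.
- case/andP => p_dvd_d d_dvd_L; apply/mapP; exists (d %/ p)%N; last by rewrite mulnC divnK.
  by rewrite -dvdn_divisors // -(dvdn_pmul2l p_gt0) -L_eq mulnC divnK.
- case/mapP => e; rewrite -dvdn_divisors // => e_dvd -> .
  by rewrite dvdn_mulr //= {1}L_eq dvdn_pmul2l.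
Qed.

Definition necklace_sum (R : pzRingType) (a r : nat) : R :=
  \sum_(d <- divisors r) (moebius d)%:~R * ((a ^ (r %/ d))%N)%:R.

Lemma necklace_sum_gt0 (R : realDomainType) a r : (2 <= a)%N -> (0 < r)%N ->
  0 < necklace_sum R a r.
Proof.
move=> a_ge2 r_gt0.
rewrite /necklace_sum (bigD1_seq 1%N) ?divisor1 ?divisors_uniq //= divn1 mul1r.
set rest := \sum_(_ <- _ | _) _.
have rest_le : `|rest| <= (\sum_(d <- divisors r | d != 1%N) a ^ (r %/ d))%N%:R.
  apply: le_trans (ler_norm_sum _ _ _) _; rewrite natr_sum; apply: ler_sum => d _.
  rewrite normrM normr_nat; apply: ler_piMl => //.
  by rewrite -intr_norm lerz1 norm_moebius_le1.
have := sum_proper_divisors_exp_lt _ _ a_ge2 r_gt0; rewrite -(ltr_nat R).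
have := ler_norm (- rest); rewrite normrN; lra.
Qed.

Lemma necklace_sum_prime_expS_mul (R : pzRingType) p j k n :
  prime p -> (0 < k)%N -> ~~ (p %| k)%N ->
  necklace_sum R n (p ^ j.+1 * k) =
  necklace_sum R (n ^ (p ^ j.+1)) k - necklace_sum R (n ^ (p ^ j)) k.
Proof.
move=> p_pr k_gt0 p_ndvd_k; have p_gt0 := prime_gt0 p_pr.
have pjk_gt0 : (0 < p ^ j * k)%N by rewrite muln_gt0 expn_gt0 p_gt0.
have pSjk_gt0 : (0 < p ^ j.+1 * k)%N by rewrite muln_gt0 expn_gt0 p_gt0.
have p_dvd : (p %| p ^ j.+1 * k)%N by rewrite expnS -mulnA dvdn_mulr.
have pSjk_div : (p ^ j.+1 * k %/ p = p ^ j * k)%N by rewrite expnS -mulnA mulKn.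
rewrite /necklace_sum (big_divisors_split_prime _ _ _ _ p_pr pSjk_gt0 p_dvd) pSjk_div.
rewrite big_divisors_coprime_prime //; congr (_ + _).
  apply: eq_big_seq => d; rewrite -dvdn_divisors // => d_dvd_k.
  by rewrite -expnM muln_divA.
rewrite -sumrN (bigID (fun e => (p %| e)%N)) /= big1_seq ?add0r; last first.
  move=> e /andP [p_dvd_e]; rewrite -dvdn_divisors // => e_dvd.
  by rewrite moebius_mul_prime_dvd ?(dvdn_gt0 pjk_gt0 e_dvd) // mulr0z mul0r.
rewrite big_divisors_coprime_prime //; apply: eq_big_seq => e.
rewrite -dvdn_divisors // => e_dvd_k.
have p_ndvd_e : ~~ (p %| e)%N by apply: contra p_ndvd_k => /dvdn_trans; apply.
rewrite moebius_mul_prime_ndvd ?(dvdn_gt0 k_gt0 e_dvd_k) // mulrNz mulNr.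
by rewrite expnS -mulnA divnMl // -muln_divA // expnM.
Qed.

Lemma necklace_sum_prime_exp_mul_le (R : realDomainType) p m k n :
  prime p -> (2 <= n)%N -> (0 < k)%N -> ~~ (p %| k)%N ->
  necklace_sum R n (p ^ m * k) <= necklace_sum R (n ^ (p ^ m)) k.
Proof.
move=> p_pr n_ge2 k_gt0 p_ndvd_k; case: m => [|j]; first by rewrite expn0 mul1n expn1.
rewrite necklace_sum_prime_expS_mul // gerBl ltW // necklace_sum_gt0 //.
by rewrite (leq_trans n_ge2) // -{1}(expn1 n) leq_pexp2l ?expn_gt0 ?(prime_gt0 p_pr) //; lia.
Qed.

Theorem lemma2p5 (R : realType) (p n m k : nat) :
  prime p -> (2 <= n)%N -> (2 <= k)%N -> ~~ (p %| k)%N ->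
  1 - (k%:R : R) / (2 * Num.sqrt (((n ^ (p ^ m * k))%N)%:R))
    <= necklace_w R (n ^ (p ^ m)) k / (((p ^ m)%N)%:R * necklace_w R n (p ^ m * k)).
Proof.
move=> p_pr n_ge2 k_ge2 p_ndvd_k.
have k_gt0 : (0 < k)%N by lia.
have pm_gt0 : (0 < p ^ m)%N by rewrite expn_gt0 prime_gt0.
have w_eq a r : necklace_w R a r = r%:R^-1 * necklace_sum R a r by [].
have M_gt0 : 0 < necklace_sum R n (p ^ m * k) by rewrite necklace_sum_gt0 ?muln_gt0 ?pm_gt0.
have ratio_eq : necklace_w R (n ^ (p ^ m)) k / ((p ^ m)%N%:R * necklace_w R n (p ^ m * k))
                = necklace_sum R (n ^ (p ^ m)) k / necklace_sum R n (p ^ m * k).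
  rewrite !w_eq natrM; field.
  by rewrite !pnatr_eq0 -!lt0n k_gt0 pm_gt0 gt_eqF.
rewrite ratio_eq; apply: (@le_trans _ _ 1).
  by rewrite lerBlDr lerDl divr_ge0 // mulr_ge0 // sqrtr_ge0.
by rewrite ler_pdivlMr // mul1r necklace_sum_prime_exp_mul_le.
Qed.
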